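(* Let $M$ be a normalizing unit-cancellative monoid. (1) $M$ is acyclic. (2) If $M$ is finitely generated, then $M$ is atomic. (3) If $M$ is finitely generated and reduced, then $\mathcal{A}(M)$ is the unique irredundant generating set for $M$, and it is finite.
   Context: $M^\times$ is the group of units of a monoid $M$; $M$ is reduced if $M^\times=\{1\}$. $M$ is normalizing if $aM=Ma$ for all $a\in M$. $M$ is unit-cancellative if $a=ab$ or $a=ba$ implies $b\in M^\times$. $M$ is acyclic if $a=bac$ implies $b,c\in M^\times$. An atom is a non-unit $a$ such that $a=bc$ implies $b\in M^\times$ or $c\in M^\times$; $\mathcal{A}(M)$ is the set of atoms; $M$ is atomic if every non-unit is a product of atoms. A generating set of $M$ is irredundant if no proper subset of it generates $M$ as a monoid. *)

From Stdlib Require Import List.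
Import ListNotations.
Set Implicit Arguments.

Record monoid := Monoid {
  carrier :> Type;
  mul : carrier -> carrier -> carrier;
  one : carrier;
  mulA : forall a b c, mul a (mul b c) = mul (mul a b) c;
  mul1m : forall a, mul one a = a;
  mulm1 : forall a, mul a one = a
}.

Section Defs.
Variable M : monoid.
Local Notation "a * b" := (mul M a b).
Local Notation "1" := (one M).

Definition is_unit (u : M) : Prop := exists v : M, u * v = 1 /\ v * u = 1.

Definition reduced : Prop := forall u : M, is_unit u -> u = 1.

(* aM = Ma for all a *)
Definition normalizing : Prop :=
  forall a : M, (forall b : M, exists c : M, a * b = c * a) /\
                (forall b : M, exists c : M, b * a = a * c).

Definition unit_cancellative : Prop :=
  forall a b : M, (a = a * b \/ a = b * a) -> is_unit b.

Definition acyclic : Prop :=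
  forall a b c : M, a = b * a * c -> is_unit b /\ is_unit c.

Definition atom (a : M) : Prop :=
  ~ is_unit a /\ forall b c : M, a = b * c -> is_unit b \/ is_unit c.

Definition prod (l : list M) : M := fold_right (mul M) 1 l.

Definition atomic : Prop :=
  forall a : M, ~ is_unit a -> exists l : list M, Forall atom l /\ a = prod l.

Definition generates (S : M -> Prop) : Prop :=
  forall a : M, exists l : list M, Forall S l /\ a = prod l.

Definition finitely_generated : Prop :=
  exists l : list M, generates (fun x => In x l).

Definition proper_subset (S' S : M -> Prop) : Prop :=
  (forall x, S' x -> S x) /\ exists x, S x /\ ~ S' x.

Definition irredundant_generating_set (S : M -> Prop) : Prop :=
  generates S /\ forall S' : M -> Prop, proper_subset S' S -> ~ generates S'.

Definition finite_set (S : M -> Prop) : Prop :=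
  exists l : list M, forall x, S x <-> In x l.

End Defs.

(* In a unit-cancellative monoid a one-sided inverse is two-sided, so a product
   is a unit only if both factors are.  If a = b a c, normality moves c past a
   and gives a = (b c') a, whence b c' and so b are units; likewise for c.
   Acyclicity makes every decomposable generator g = b c (b, c non-units)
   redundant: b and c are products of generators, and g cannot occur among
   them.  Deleting such generators from a finite generating set leaves atoms
   and units, and absorbing the units into neighbouring atoms gives atomicity.
   In the reduced case an atom can only be written as a product containing
   itself, so it lies in every generating set; hence the atoms form the unique
   irredundant generating set, contained in any finite one. *)

From Stdlib Require Import List Classical Wf_nat Lia.
Import ListNotations.
Set Implicit Arguments.
Unset Strict Implicit.

Local Arguments is_unit {M} u.
Local Arguments atom {M} a.
Local Arguments prod {M} l.
Local Arguments generates {M} S.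
Local Arguments irredundant_generating_set {M} S.
Local Arguments finite_set {M} S.

Lemma finite_restriction {A : Type} (P : A -> Prop) (l : list A) :
  exists l', forall x, In x l /\ P x <-> In x l'.
Proof.
  induction l as [|y l IH]; [exists []; simpl; tauto|].
  destruct IH as [l' IH].
  destruct (classic (P y)) as [Hy|Hy]; [exists (y :: l')|exists l'];
    intro x; simpl; rewrite <- IH; split; try (intros [[<-|H] Hx]); try tauto.
  intros [<-|H]; tauto.
Qed.

Section Monoid.

Variable M : monoid.
Local Notation "a * b" := (mul M a b).
Local Notation "1" := (one M).

Lemma prod_app (l1 l2 : list M) : prod (l1 ++ l2) = prod l1 * prod l2.
Proof.
  induction l1 as [|x l1 IH]; simpl.
  - now rewrite mul1m.
  - now rewrite IH, mulA.
Qed.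

Lemma unit_one : is_unit (1 : M).
Proof. exists 1. now rewrite mul1m. Qed.

Lemma unit_mul (a b : M) : is_unit a -> is_unit b -> is_unit (a * b).
Proof.
  intros [a' [Ha1 Ha2]] [b' [Hb1 Hb2]]. exists (b' * a'). split.
  - now rewrite <- mulA, (mulA _ b b' a'), Hb1, mul1m.
  - now rewrite <- mulA, (mulA _ a' a b), Ha2, mul1m.
Qed.

Lemma atom_mul_unit_l (u x : M) : is_unit u -> atom x -> atom (u * x).
Proof.
  intros [u' [Hu1 Hu2]] [Hxn Hx]. split.
  - intro H. apply Hxn.
    replace x with (u' * (u * x)) by now rewrite mulA, Hu2, mul1m.
    apply unit_mul; [exists u|]; auto.
  - intros b c e.
    assert (Ex : x = (u' * b) * c) by now rewrite <- mulA, <- e, mulA, Hu2, mul1m.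
    destruct (Hx _ _ Ex) as [H|H]; auto. left.
    replace b with (u * (u' * b)) by now rewrite mulA, Hu1, mul1m.
    apply unit_mul; [exists u'|]; auto.
Qed.

Lemma atom_mul_unit_r (x u : M) : atom x -> is_unit u -> atom (x * u).
Proof.
  intros [Hxn Hx] [u' [Hu1 Hu2]]. split.
  - intro H. apply Hxn.
    replace x with ((x * u) * u') by now rewrite <- mulA, Hu1, mulm1.
    apply unit_mul; [|exists u]; auto.
  - intros b c e.
    assert (Ex : x = b * (c * u')) by now rewrite mulA, <- e, <- mulA, Hu1, mulm1.
    destruct (Hx _ _ Ex) as [H|H]; auto. right.
    replace c with ((c * u') * u) by now rewrite <- mulA, Hu2, mulm1.
    apply unit_mul; [|exists u']; auto.
Qed.

Lemma not_atom_decomposable (g : M) :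
  ~ is_unit g -> ~ atom g ->
  exists b c, g = b * c /\ ~ is_unit b /\ ~ is_unit c.
Proof.
  intros Hgu Hga. apply NNPP. intro Hn. apply Hga. split; [exact Hgu|].
  intros b c e. apply NNPP. intro Hbc. apply Hn. exists b, c.
  split; [exact e|]. split; intro H; apply Hbc; auto.
Qed.

Lemma prod_atoms_units (l : list M) :
  Forall (fun x => atom x \/ is_unit x) l ->
  is_unit (prod l) \/ exists l', Forall atom l' /\ prod l = prod l'.
Proof.
  induction 1 as [|x l Hx _ IH]; [left; apply unit_one|]. simpl.
  destruct IH as [Hu|[[|y l'] [Hl' E]]].
  - destruct Hx as [Hx|Hx].
    + right. exists [x * prod l]. simpl. rewrite mulm1.
      split; [constructor; [apply atom_mul_unit_r|]|]; auto.
    + left. now apply unit_mul.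
  - simpl in E. rewrite E, mulm1.
    destruct Hx as [Hx|Hx]; [right; exists [x]; simpl; rewrite mulm1|left]; auto.
  - inversion_clear Hl' as [|? ? Hy Hl'']. rewrite E. simpl.
    destruct Hx as [Hx|Hx]; right.
    + exists (x :: y :: l'). auto.
    + exists (x * y :: l'). simpl. rewrite mulA.
      split; [constructor; [apply atom_mul_unit_l|]|]; auto.
Qed.

Lemma generates_trans (S T : M -> Prop) :
  generates S -> (forall x, S x -> exists l, Forall T l /\ x = prod l) ->
  generates T.
Proof.
  intros HS HST a. destruct (HS a) as [l [Hl ->]].
  induction Hl as [|x l Hx _ [l' [Hl' E]]]; [now exists []|].
  destruct (HST x Hx) as [lx [Hlx Ex]].
  exists (lx ++ l'). split; [now apply Forall_app|].
  simpl. now rewrite prod_app, <- Ex, <- E.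
Qed.

Lemma generates_mono (S T : M -> Prop) :
  generates S -> (forall x, S x -> T x) -> generates T.
Proof.
  intros HS HST. apply (generates_trans HS).
  intros x Hx. exists [x]. simpl. rewrite mulm1. auto.
Qed.

Section UnitCancellative.

Hypothesis UC : unit_cancellative M.

Lemma mul_eq1_unit (x y : M) : x * y = 1 -> is_unit x /\ is_unit y.
Proof.
  intros Hxy.
  assert (Hx : x = x * (y * x)) by now rewrite mulA, Hxy, mul1m.
  destruct (UC (or_introl Hx)) as [v [_ Hv]].
  assert (Hvy : v * y = y).
  { transitivity ((v * y) * (x * y)); [now rewrite Hxy, mulm1|].
    now rewrite mulA, <- (mulA _ v y x), Hv, mul1m. }
  assert (Hyx : y * x = 1) by now rewrite <- Hvy at 1; rewrite <- mulA.
  split; [exists y | exists x]; auto.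
Qed.

Lemma unit_mulP (x y : M) : is_unit (x * y) -> is_unit x /\ is_unit y.
Proof.
  intros [w [Hw1 Hw2]]. split.
  - rewrite <- mulA in Hw1. exact (proj1 (mul_eq1_unit Hw1)).
  - rewrite mulA in Hw2. exact (proj2 (mul_eq1_unit Hw2)).
Qed.

Lemma normalizing_acyclic : normalizing M -> acyclic M.
Proof.
  intros N a b c H.
  destruct (proj2 (N a) b) as [b' Hb'].
  destruct (proj1 (N a) c) as [c' Hc'].
  split.
  - assert (E : a = (b * c') * a) by now rewrite <- mulA, <- Hc', mulA.
    exact (proj1 (unit_mulP (UC (or_intror E)))).
  - assert (E : a = a * (b' * c)) by now rewrite mulA, <- Hb'.
    exact (proj2 (unit_mulP (UC (or_introl E)))).
Qed.

Section Acyclic.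

Hypothesis AC : acyclic M.

Lemma acyclic_in_prod (g x y : M) (l : list M) :
  In g l -> g = x * (prod l * y) -> is_unit x /\ is_unit y.
Proof.
  intros Hg E. destruct (in_split g l Hg) as [l1 [l2 ->]].
  rewrite prod_app in E. simpl in E.
  assert (E' : g = (x * prod l1) * g * (prod l2 * y)) by (rewrite !mulA in E; rewrite !mulA; exact E).
  destruct (AC E') as [H1 H2].
  split; [exact (proj1 (unit_mulP H1)) | exact (proj2 (unit_mulP H2))].
Qed.

Lemma generates_remove_decomposable (S : M -> Prop) (g b c : M) :
  generates S -> g = b * c -> ~ is_unit b -> ~ is_unit c ->
  generates (fun x => S x /\ x <> g).
Proof.
  intros HS Eg Hb Hc. apply (generates_trans HS). intros x Hx.
  destruct (classic (x = g)) as [->|Hxg].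
  - destruct (HS b) as [lb [Hlb Eb]], (HS c) as [lc [Hlc Ec]].
    assert (Nb : ~ In g lb).
    { intro Hg. apply Hc. apply (@acyclic_in_prod g 1 c lb Hg).
      now rewrite mul1m, <- Eb. }
    assert (Nc : ~ In g lc).
    { intro Hg. apply Hb. apply (@acyclic_in_prod g b 1 lc Hg).
      now rewrite mulm1, <- Ec. }
    exists (lb ++ lc). rewrite prod_app, <- Eb, <- Ec. split; [|exact Eg].
    rewrite Forall_forall in Hlb, Hlc.
    apply Forall_app. split; apply Forall_forall; intros z Hz;
      split; auto; intros ->; contradiction.
  - exists [x]. simpl. rewrite mulm1. auto.
Qed.

Lemma generating_list_atoms_units (G : list M) :
  generates (fun x => In x G) ->
  exists G', generates (fun x => In x G') /\
             Forall (fun x : M => atom x \/ is_unit x) G'.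
Proof.
  remember (length G) as n eqn:Hn. revert G Hn.
  induction n as [n IH] using lt_wf_ind. intros G Hn HG.
  destruct (classic (Forall (fun x => atom x \/ is_unit x) G)) as [HF|HF];
    [exists G; auto|].
  apply Exists_Forall_neg in HF; [|intro; apply classic].
  apply Exists_exists in HF. destruct HF as [g [Hg Hng]].
  destruct (@not_atom_decomposable g) as [b [c [Eg [Hb Hc]]]]; [tauto|tauto|].
  destruct (in_split g G Hg) as [l1 [l2 EG]].
  apply (IH (length (l1 ++ l2))) with (G := l1 ++ l2);
    [subst; rewrite !length_app; simpl; lia|reflexivity|].
  apply (generates_mono (generates_remove_decomposable HG Eg Hb Hc)).
  intros x [Hx Hxg]. subst G. apply in_app_iff in Hx. apply in_app_iff.
  simpl in Hx. destruct Hx as [H|[H|H]]; auto. congruence.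
Qed.

Lemma finitely_generated_atomic : finitely_generated M -> atomic M.
Proof.
  intros [G HG] a Ha.
  destruct (generating_list_atoms_units HG) as [G' [HG' HF]].
  destruct (HG' a) as [l [Hl ->]].
  destruct (@prod_atoms_units l) as [Hu|Hl']; [|contradiction|exact Hl'].
  rewrite Forall_forall in *. auto.
Qed.

End Acyclic.
End UnitCancellative.

Section Reduced.

Hypothesis R : reduced M.

Lemma atom_in_prod (x : M) (l : list M) : atom x -> x = prod l -> In x l.
Proof.
  intros Hx. induction l as [|y l IH]; simpl; intro E.
  - exfalso. apply (proj1 Hx). rewrite E. apply unit_one.
  - destruct (proj2 Hx _ _ E) as [U|U]; apply R in U.
    + right. apply IH. now rewrite E, U, mul1m.
    + left. now rewrite E, U, mulm1.
Qed.

Lemma atom_generating_set (S : M -> Prop) (x : M) : generates S -> atom x -> S x.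
Proof.
  intros HS Hx. destruct (HS x) as [l [Hl E]].
  exact (proj1 (Forall_forall _ _) Hl x (atom_in_prod Hx E)).
Qed.

Lemma atomic_generates_atoms : atomic M -> generates (@atom M).
Proof.
  intros A a. destruct (classic (is_unit a)) as [U|U]; [|exact (A a U)].
  exists []. split; [constructor|now apply R].
Qed.

Hypothesis A : atomic M.

Lemma atoms_irredundant_generating_set : irredundant_generating_set (@atom M).
Proof.
  split; [exact (atomic_generates_atoms A)|].
  intros S [_ [x [Hx Hnx]]] HS. exact (Hnx (atom_generating_set HS Hx)).
Qed.

Lemma irredundant_generating_set_atoms (S : M -> Prop) :
  irredundant_generating_set S -> forall x, S x <-> atom x.
Proof.
  intros [HS Hirr] x. split; [|exact (atom_generating_set HS)].
  intro Sx. apply NNPP. intro Hx.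
  apply (Hirr (fun y => S y /\ y <> x)).
  - split; [tauto|]. exists x. tauto.
  - apply (generates_mono (atomic_generates_atoms A)). intros y Hy.
    split; [exact (atom_generating_set HS Hy)|]. intros ->. contradiction.
Qed.

Lemma finitely_generated_atoms_finite : finitely_generated M -> finite_set (@atom M).
Proof.
  intros [G HG]. destruct (finite_restriction (@atom M) G) as [l Hl].
  exists l. intro x. rewrite <- Hl. split; [|tauto].
  intro Hx. split; [exact (atom_generating_set HG Hx)|exact Hx].
Qed.

End Reduced.
End Monoid.

Theorem proposition5p6 (M : monoid) :
  normalizing M -> unit_cancellative M ->
  acyclic M /\
  (finitely_generated M -> atomic M) /\
  (finitely_generated M -> reduced M ->
     @irredundant_generating_set M (@atom M) /\
     (forall S : M -> Prop, @irredundant_generating_set M S ->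
        forall x : M, S x <-> @atom M x) /\
     @finite_set M (@atom M)).
Proof.
  intros N UC.
  pose proof (normalizing_acyclic UC N) as AC.
  pose proof (finitely_generated_atomic UC AC) as FGA.
  split; [exact AC|]. split; [exact FGA|].
  intros FG R. split; [|split].
  - exact (atoms_irredundant_generating_set R (FGA FG)).
  - exact (irredundant_generating_set_atoms R (FGA FG)).
  - exact (finitely_generated_atoms_finite R FG).
Qed.
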